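(* Let $\mathcal{P}=\{(P_1,\Gamma_1),\ldots,(P_m,\Gamma_m)\}$ be a set of $m$ uncertain points in $\mathbb{R}^2$ under the multipoint model with $P=\bigcup_{i=1}^m P_i$ and $|P|=n$. For any $\beta\in[0,1]$, the $\beta$-hull of $\mathcal{P}$ has $O(n)$ vertices.
   Context: Multipoint model: $P_i=\{p_i^1,\ldots,p_i^{n_i}\}\subset\mathbb{R}^2$ are the possible sites of the $i$-th uncertain point and $\Gamma_i=\{\gamma_i^1,\ldots,\gamma_i^{n_i}\}\subset(0,1]$ the associated probabilities, with $\sum_j\gamma_i^j\le1$. A convex set $C\subseteq\mathbb{R}^2$ is $\beta$-dense with respect to $\mathcal{P}$ if $\sum_{j:\,p_i^j\in C}\gamma_i^j\ge\beta$ for every $i\le m$. The $\beta$-hull of $\mathcal{P}$ is the intersection of all convex $\beta$-dense sets with respect to $\mathcal{P}$. *)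

From Stdlib Require Import Reals List Classical ClassicalEpsilon.
Import ListNotations.
Open Scope R_scope.

Definition point := (R * R)%type.

Definition comb (t : R) (x y : point) : point :=
  ((1 - t) * fst x + t * fst y, (1 - t) * snd x + t * snd y).

Definition convex (C : point -> Prop) : Prop :=
  forall x y t, C x -> C y -> 0 <= t <= 1 -> C (comb t x y).

(* An uncertain point in the multipoint model: the list of pairs
   (p_i^j, gamma_i^j), j = 1..n_i. *)
Definition upoint := list (point * R).

Definition sites (U : upoint) : list point := map fst U.

Definition valid_upoint (U : upoint) : Prop :=
  NoDup (sites U) /\
  (forall q, In q U -> 0 < snd q <= 1) /\
  fold_right Rplus 0 (map snd U) <= 1.

Definition mass (C : point -> Prop) (U : upoint) : R :=
  fold_right Rplus 0
    (map (fun q => if excluded_middle_informative (C (fst q)) then snd q else 0) U).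

Definition beta_dense (beta : R) (Ps : list upoint) (C : point -> Prop) : Prop :=
  forall U, In U Ps -> beta <= mass C U.

Definition beta_hull (beta : R) (Ps : list upoint) : point -> Prop :=
  fun x => forall C, convex C -> beta_dense beta Ps C -> C x.

(* vertices of a convex set = its extreme points *)
Definition extreme_point (S : point -> Prop) (x : point) : Prop :=
  S x /\ forall y z t, S y -> S z -> 0 < t < 1 -> x = comb t y z -> y = z.

(* Every vertex x of the beta-hull H is supported by a site: there is q in P
   with H to the left of the line from x through q. Otherwise, for every convex
   beta-dense C, no closed halfplane bounded by the line through x and a site
   of C is beta-dense, so the vectors from x to the sites in C positively span the
   plane; then x +- eps (1,0) lie in every such C, with eps depending only on
   the sites, and x is the midpoint of two points of H. The vertices supported
   by a site q other than q itself are collinear with q, and of three collinear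
   points the middle one is not extreme, so q supports at most two of them.
   Hence H has at most n + 2n vertices. *)

From Stdlib Require Import Reals List Lra Lia Psatz Classical ClassicalEpsilon.
Import ListNotations.
Open Scope R_scope.

Definition vsub (a b : point) : point := (fst a - fst b, snd a - snd b).
Definition cross (a b : point) : R := fst a * snd b - snd a * fst b.
Definition dot (a b : point) : R := fst a * fst b + snd a * snd b.
Definition shift (x : point) (t : R) (d : point) : point :=
  (fst x + t * fst d, snd x + t * snd d).
Definition lincomb (al : R) (a : point) (be : R) (b : point) : point :=
  (al * fst a + be * fst b, al * snd a + be * snd b).

Lemma Rdiv_nonpos_neg (a b : R) : a <= 0 -> b < 0 -> 0 <= a / b.
Proof.
  intros Ha Hb. replace (a / b) with (- a * / - b) by (field; lra).
  apply Rle_mult_inv_pos; lra.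
Qed.

Lemma cross_antisym (a b : point) : cross a b = - cross b a.
Proof. unfold cross; ring. Qed.

Lemma dot_comm (a b : point) : dot a b = dot b a.
Proof. unfold dot; ring. Qed.

Lemma dot_vsub_self_pos (a q : point) : a <> q -> 0 < dot (vsub a q) (vsub a q).
Proof.
  destruct a as [a1 a2], q as [q1 q2]; unfold dot, vsub; simpl; intros Hne.
  assert (h1 := Rle_0_sqr (a1 - q1)); assert (h2 := Rle_0_sqr (a2 - q2)).
  unfold Rsqr in *. apply Rnot_le_lt; intro Hle. apply Hne.
  assert (z1 : (a1 - q1) * (a1 - q1) = 0) by lra.
  assert (z2 : (a2 - q2) * (a2 - q2) = 0) by lra.
  apply Rmult_integral in z1; apply Rmult_integral in z2.
  f_equal; lra.
Qed.

Lemma cross_dot_identity (d m w : point) :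
  dot d d * cross m w = dot d m * cross d w - dot d w * cross d m.
Proof. unfold dot, cross; ring. Qed.

Lemma cross_eq0_scale (a v : point) : cross a v = 0 -> 0 < dot a a ->
  v = (dot a v / dot a a * fst a, dot a v / dot a a * snd a).
Proof.
  destruct a as [a1 a2], v as [v1 v2]; unfold cross, dot; simpl; intros Hc Hd.
  assert (Hv : a1 * v2 = a2 * v1) by lra.
  f_equal; field_simplify_eq; try lra.
  - replace (a1 * a2 * v2) with (a2 * (a1 * v2)) by ring. rewrite Hv; ring.
  - replace (a1 * v1 * a2) with (a1 * (a2 * v1)) by ring. rewrite <- Hv; ring.
Qed.

Lemma collinear_shift (q a v : point) :
  cross (vsub a q) (vsub v q) = 0 -> a <> q ->
  v = shift q (dot (vsub a q) (vsub v q) / dot (vsub a q) (vsub a q)) (vsub a q).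
Proof.
  intros Hc Hne.
  assert (E := cross_eq0_scale _ _ Hc (dot_vsub_self_pos a q Hne)).
  set (t := dot (vsub a q) (vsub v q) / dot (vsub a q) (vsub a q)) in *.
  clearbody t; destruct v, q, a; unfold vsub, shift in *; simpl in *.
  injection E; intros E2 E1; f_equal; lra.
Qed.

Lemma shift_between (q u : point) (ta tb tc : R) : ta < tb < tc ->
  shift q tb u = comb ((tb - ta) / (tc - ta)) (shift q ta u) (shift q tc u).
Proof. intros H; unfold shift, comb; simpl; f_equal; field; lra. Qed.

Lemma shift_inj (q u : point) (s t : R) : 0 < dot u u ->
  shift q s u = shift q t u -> s = t.
Proof.
  destruct q, u as [u1 u2]; unfold shift, dot; simpl; intros Hu E.
  injection E; intros E2 E1.
  assert (e1 : s * u1 = t * u1) by lra; assert (e2 : s * u2 = t * u2) by lra.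
  apply (Rmult_eq_reg_r (u1 * u1 + u2 * u2)); [|lra].
  replace (s * _) with (s * u1 * u1 + s * u2 * u2) by ring.
  rewrite e1, e2; ring.
Qed.

Lemma convex_cone_step (C : point -> Prop) (x a b : point) (al be eps : R) :
  convex C -> C x -> C a -> C b -> 0 <= al -> 0 <= be -> 0 <= eps ->
  eps * (al + be) <= 1 ->
  C (shift x eps (lincomb al (vsub a x) be (vsub b x))).
Proof.
  intros HC Cx Ca Cb Hal Hbe Heps Hle.
  destruct (Req_dec (al + be) 0) as [Hz|Hnz].
  - replace (shift x eps _) with x; [exact Cx|].
    assert (al = 0) by lra; assert (be = 0) by lra; subst.
    destruct x; unfold shift, lincomb; simpl; f_equal; ring.
  - assert (Hs : 0 < al + be) by lra.
    assert (Cy : C (comb (be / (al + be)) a b)).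
    { apply HC; auto. split.
      - apply Rle_mult_inv_pos; lra.
      - apply (Rmult_le_reg_r (al + be)); auto. field_simplify; lra. }
    replace (shift x eps _) with (comb (eps * (al + be)) x (comb (be / (al + be)) a b)).
    + apply HC; auto. split; [apply Rmult_le_pos|]; lra.
    + destruct x, a, b; unfold shift, lincomb, comb, vsub; simpl; f_equal; field; lra.
Qed.

Lemma halfplane_convex (s x : point) :
  convex (fun y => 0 <= cross (vsub s x) (vsub y x)).
Proof.
  intros y1 y2 t h1 h2 ht.
  replace (cross (vsub s x) (vsub (comb t y1 y2) x)) with
    ((1 - t) * cross (vsub s x) (vsub y1 x) + t * cross (vsub s x) (vsub y2 x))
    by (unfold cross, vsub, comb; simpl; ring).
  apply Rplus_le_le_0_compat; apply Rmult_le_pos; lra.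
Qed.

Lemma extreme_not_between (S : point -> Prop) (y a b : point) (t : R) :
  extreme_point S y -> S a -> S b -> 0 < t < 1 -> y = comb t a b -> a = b.
Proof. intros [_ Hext]; apply Hext. Qed.

(* Every vector has another one strictly clockwise from it; for a finite set
   this means the vectors positively span the plane. *)
Definition surrounds_origin (L : list point) : Prop :=
  forall v, In v L -> exists w, In w L /\ cross v w < 0.

Lemma exists_max_in_list (L : list point) (Q : point -> Prop) (f : point -> R) :
  (exists v, In v L /\ Q v) ->
  exists m, In m L /\ Q m /\ forall v, In v L -> Q v -> f v <= f m.
Proof.
  induction L as [|a L IH]; intros [v [Hv Qv]]; [destruct Hv|].
  destruct (classic (exists v, In v L /\ Q v)) as [Hex|Hno].
  - destruct (IH Hex) as [m [Hm [Qm Hmax]]].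
    destruct (classic (Q a /\ f m < f a)) as [[Qa Hlt]|Hn].
    + exists a; repeat split; [left; auto|auto|].
      intros w [<-|Hw] Qw; [lra|]. specialize (Hmax w Hw Qw); lra.
    + exists m; repeat split; [right; auto|auto|].
      intros w [<-|Hw] Qw; auto.
      apply Rnot_lt_le; intro; apply Hn; auto.
  - destruct Hv as [<-|Hv]; [|exfalso; eauto].
    exists a; repeat split; [left; auto|auto|].
    intros w [<-|Hw] Qw; [lra|]. exfalso; eauto.
Qed.

(* [dot d v / cross d v] is the cotangent of the angle from [d] to [v]. *)
Lemma cross_nonneg_of_cot_le (d m w : point) :
  0 < dot d d -> 0 < cross d m * cross d w ->
  dot d w / cross d w <= dot d m / cross d m -> 0 <= cross m w.
Proof.
  intros Hd Hs Hf.
  assert (cm : cross d m <> 0) by (intro e; rewrite e in Hs; lra).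
  assert (cw : cross d w <> 0) by (intro e; rewrite e in Hs; lra).
  set (fw := dot d w / cross d w) in *. set (fm := dot d m / cross d m) in *.
  assert (e1 : dot d w = fw * cross d w) by (unfold fw; field; auto).
  assert (e2 : dot d m = fm * cross d m) by (unfold fm; field; auto).
  assert (I := cross_dot_identity d m w). rewrite e1, e2 in I.
  assert (0 <= dot d d * cross m w) by nra.
  apply Rnot_lt_le; intro; nra.
Qed.

Section Surrounding.

Variables (L : list point) (d : point).
Hypotheses (Hd : 0 < dot d d) (HL : L <> []) (Hsur : surrounds_origin L).

Lemma surrounds_left_of :
  (forall a, In a L -> cross d a = 0 -> dot d a <= 0) ->
  exists v, In v L /\ 0 < cross d v.
Proof.
  intros Hcol. apply NNPP; intro NA.
  assert (Hle : forall v, In v L -> cross d v <= 0).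
  { intros v Hv; apply Rnot_lt_le; intro; apply NA; eauto. }
  destruct (classic (exists v, In v L /\ cross d v = 0)) as [[v [Hv Hz]]|NZ].
  - destruct (Hsur v Hv) as [w [Hw Hvw]].
    assert (I := cross_dot_identity d v w). rewrite Hz in I.
    assert (Hdv := Hcol v Hv Hz). assert (Hdw := Hle w Hw). nra.
  - assert (Hlt : forall v, In v L -> cross d v < 0).
    { intros v Hv. destruct (Rle_lt_or_eq_dec _ _ (Hle v Hv)); auto.
      exfalso; apply NZ; eauto. }
    destruct L as [|v0 L0]; [congruence|].
    destruct (exists_max_in_list (v0 :: L0) (fun _ => True)
                (fun v => dot d v / cross d v)) as [m [Hm [_ Hmax]]].
    { exists v0; split; [left|]; auto. }
    destruct (Hsur m Hm) as [w [Hw Hmw]].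
    assert (0 <= cross m w); [|lra].
    apply (cross_nonneg_of_cot_le d m w Hd).
    + assert (Hm1 := Hlt m Hm); assert (Hw1 := Hlt w Hw); nra.
    + exact (Hmax w Hw I).
Qed.

(* The left vector [m] closest in angle to [d], together with the vector
   clockwise from it, spans a cone containing [d]. *)
Lemma surrounds_cone :
  (exists a b, In a L /\ In b L /\ cross a b < 0 /\ cross d b <= 0 /\ cross a d <= 0) \/
  (exists a, In a L /\ cross d a = 0 /\ 0 < dot d a).
Proof.
  destruct (classic (exists a, In a L /\ cross d a = 0 /\ 0 < dot d a)) as [Y|NZ];
    [right; exact Y|left].
  assert (Hcol : forall a, In a L -> cross d a = 0 -> dot d a <= 0).
  { intros a Ha Hz; apply Rnot_lt_le; intro; apply NZ; eauto. }
  destruct (exists_max_in_list L (fun v => 0 < cross d v) (fun v => dot d v / cross d v)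
              (surrounds_left_of Hcol)) as [m [Hm [Qm Hmax]]].
  destruct (Hsur m Hm) as [w [Hw Hmw]].
  exists m, w. repeat split; auto.
  - destruct (Rtotal_order (cross d w) 0) as [Hneg|[Hz|Hpos]]; [lra| |].
    + assert (I := cross_dot_identity d m w). rewrite Hz in I.
      assert (Hdw := Hcol w Hw Hz). nra.
    + assert (0 <= cross m w); [|lra].
      apply (cross_nonneg_of_cot_le d m w Hd); [nra|exact (Hmax w Hw Hpos)].
  - rewrite cross_antisym; lra.
Qed.

End Surrounding.

(* Bounds the coefficients of [d] in the cone spanned by [a] and [b] (first two
   terms) or along [a] alone (last term); since it depends only on the pair, it
   yields a step size uniform over all convex beta-dense sets. *)
Definition cone_bound (d a b : point) : R :=
  Rabs (cross d b / cross a b) + Rabs (cross a d / cross a b) + Rabs (dot d a / dot a a).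

Lemma surrounds_decompose (L : list point) (d : point) :
  0 < dot d d -> L <> [] -> surrounds_origin L ->
  exists a b al be, In a L /\ In b L /\ 0 <= al /\ 0 <= be /\
    al + be <= cone_bound d a b /\ d = lincomb al a be b.
Proof.
  intros Hd HL Hsur.
  destruct (surrounds_cone L d Hd HL Hsur)
    as [[a [b [Ha [Hb [Hab [Hdb Had]]]]]]|[a [Ha [Hda Hpa]]]].
  - exists a, b, (cross d b / cross a b), (cross a d / cross a b).
    assert (Hal := Rdiv_nonpos_neg _ _ Hdb Hab).
    assert (Hbe := Rdiv_nonpos_neg _ _ Had Hab).
    repeat split; auto.
    + unfold cone_bound. rewrite (Rabs_pos_eq _ Hal), (Rabs_pos_eq _ Hbe).
      assert (h := Rabs_pos (dot d a / dot a a)); lra.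
    + revert Hab; destruct d, a, b; unfold cross, lincomb; simpl; intros Hab.
      f_equal; field; lra.
  - assert (Haa : 0 < dot a a).
    { destruct d, a; unfold cross, dot in *; simpl in *; nra. }
    assert (Hla : 0 <= dot d a / dot a a) by (apply Rle_mult_inv_pos; lra).
    exists a, a, (dot d a / dot a a), 0. repeat split; auto; try lra.
    + unfold cone_bound. rewrite (Rabs_pos_eq _ Hla).
      assert (h1 := Rabs_pos (cross d a / cross a a)).
      assert (h2 := Rabs_pos (cross a d / cross a a)). lra.
    + assert (Hc : cross a d = 0) by (rewrite cross_antisym; lra).
      rewrite (cross_eq0_scale a d Hc Haa) at 1. rewrite dot_comm.
      unfold lincomb; f_equal; ring.
Qed.

Definition pbool (P : Prop) : bool :=
  if excluded_middle_informative P then true else false.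

Lemma pboolP (P : Prop) : pbool P = true <-> P.
Proof. unfold pbool; destruct (excluded_middle_informative P); split; auto; discriminate. Qed.

Lemma mass_mono (C D : point -> Prop) (U : upoint) :
  (forall q, In q U -> 0 <= snd q) ->
  (forall q, In q U -> C (fst q) -> D (fst q)) -> mass C U <= mass D U.
Proof.
  induction U as [|a U IH]; intros Hnn Hsub; unfold mass; simpl; [lra|].
  fold (mass C U) (mass D U).
  assert (IH' := IH (fun q h => Hnn q (or_intror h)) (fun q h => Hsub q (or_intror h))).
  assert (Ha := Hnn a (or_introl eq_refl)).
  destruct (excluded_middle_informative (C (fst a))) as [c|c];
  destruct (excluded_middle_informative (D (fst a))) as [d|d]; try lra.
  exfalso; apply d, Hsub; [left|]; auto.
Qed.

Lemma beta_dense_mono (beta : R) (Ps : list upoint) (C D : point -> Prop) :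
  (forall U q, In U Ps -> In q U -> 0 <= snd q) ->
  (forall U q, In U Ps -> In q U -> C (fst q) -> D (fst q)) ->
  beta_dense beta Ps C -> beta_dense beta Ps D.
Proof.
  intros Hnn Hsub HC U HU.
  apply Rle_trans with (mass C U); [apply HC; auto|].
  apply mass_mono; eauto.
Qed.

Lemma list_upper_bound {A : Type} (g : A -> R) (l : list A) :
  exists M, 0 < M /\ forall z, In z l -> g z <= M.
Proof.
  induction l as [|a l [M [HM HMb]]].
  - exists 1; split; [lra|intros _ []].
  - exists (Rmax M (g a)); split.
    + apply Rlt_le_trans with M; [exact HM|apply Rmax_l].
    + intros z [<-|Hz]; [apply Rmax_r|].
      apply Rle_trans with M; [exact (HMb z Hz)|apply Rmax_l].
Qed.

Definition supports (S : point -> Prop) (q x : point) : Prop :=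
  forall y, S y -> 0 <= cross (vsub q x) (vsub y x).

Section Hull.

Variables (beta : R) (Ps : list upoint) (P : list point).
Hypothesis Hnn : forall U q, In U Ps -> In q U -> 0 <= snd q.
Hypothesis Hsites : forall U q, In U Ps -> In q U -> In (fst q) P.

Lemma dense_meets_sites (x : point) (C : point -> Prop) :
  beta_hull beta Ps x -> beta_dense beta Ps C -> exists s, In s P /\ C s.
Proof.
  intros Hx HD. apply NNPP; intro Hno.
  apply (Hx (fun _ => False)); [intros ? ? ? []|].
  apply (beta_dense_mono beta Ps C); auto.
  intros U q HU Hq Cq. apply Hno. exists (fst q); eauto.
Qed.

(* Otherwise the closed halfplane left of the ray from [x] through [s] contains
   every site of [C], so it is convex and beta-dense, and [s] would support
   the hull at [x]. *)
Lemma unsupported_site_turns (x s : point) (C : point -> Prop) :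
  ~ (exists q, In q P /\ supports (beta_hull beta Ps) q x) ->
  beta_dense beta Ps C -> In s P -> C s ->
  exists w, In w P /\ C w /\ cross (vsub s x) (vsub w x) < 0.
Proof.
  intros Hns HD Hs Cs. apply NNPP; intro Hno. apply Hns. exists s; split; auto.
  intros y Hy. apply (Hy _ (halfplane_convex s x)).
  apply (beta_dense_mono beta Ps C); auto.
  intros U q HU Hq Cq. apply Rnot_lt_le; intro Hlt.
  apply Hno. exists (fst q); eauto.
Qed.

Lemma unsupported_hull_shift (x d : point) (eps : R) :
  beta_hull beta Ps x -> ~ (exists q, In q P /\ supports (beta_hull beta Ps) q x) ->
  0 < dot d d -> 0 <= eps ->
  (forall a b, In a P -> In b P -> eps * cone_bound d (vsub a x) (vsub b x) <= 1) ->
  beta_hull beta Ps (shift x eps d).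
Proof.
  intros Hx Hns Hd Heps Hbound C HC HD.
  set (L := map (fun s => vsub s x) (filter (fun s => pbool (C s)) P)).
  assert (inL : forall v, In v L <-> exists s, v = vsub s x /\ In s P /\ C s).
  { intros v; unfold L; rewrite in_map_iff; split.
    - intros [s [<- Hs]]. apply filter_In in Hs as [Hs Cs].
      apply (proj1 (pboolP _)) in Cs. exists s; auto.
    - intros [s [-> [Hs Cs]]]. exists s; split; auto.
      apply filter_In; split; auto. apply (proj2 (pboolP _)); auto. }
  assert (HL : L <> []).
  { destruct (dense_meets_sites x C Hx HD) as [s [Hs Cs]]. intro E.
    assert (Hin : In (vsub s x) L) by (apply inL; eauto). rewrite E in Hin; destruct Hin. }
  assert (Hsur : surrounds_origin L).
  { intros v Hv. apply inL in Hv as [s [-> [Hs Cs]]].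
    destruct (unsupported_site_turns x s C Hns HD Hs Cs) as [w [Hw [Cw Hlt]]].
    exists (vsub w x); split; auto. apply inL; eauto. }
  destruct (surrounds_decompose L d Hd HL Hsur)
    as (a & b & al & be & Ha & Hb & Hal & Hbe & Hsum & ->).
  apply inL in Ha as [sa [-> [Hsa Csa]]]. apply inL in Hb as [sb [-> [Hsb Csb]]].
  apply convex_cone_step; auto; [apply Hx; auto|].
  assert (K := Hbound sa sb Hsa Hsb).
  apply Rle_trans with (eps * cone_bound (lincomb al (vsub sa x) be (vsub sb x))
                                         (vsub sa x) (vsub sb x)); auto.
  apply Rmult_le_compat_l; auto.
Qed.

(* The two shifts by [eps] along [(1,0)] and [(-1,0)], with [eps] chosen
   uniformly over all pairs of sites, lie in every convex beta-dense set;
   their midpoint is [x]. *)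
Lemma extreme_hull_supported (x : point) :
  extreme_point (beta_hull beta Ps) x ->
  exists q, In q P /\ supports (beta_hull beta Ps) q x.
Proof.
  intros [Hx Hext]. apply NNPP; intro Hns.
  set (dirs := [((1, 0) : point); ((-1, 0) : point)]).
  destruct (list_upper_bound
              (fun z => cone_bound (fst z) (vsub (fst (snd z)) x) (vsub (snd (snd z)) x))
              (list_prod dirs (list_prod P P))) as [M [HM HMb]].
  assert (Hinv : 0 < / M) by (apply Rinv_0_lt_compat; exact HM).
  assert (Hshift : forall d, In d dirs -> beta_hull beta Ps (shift x (/ M) d)).
  { intros d Hd. apply unsupported_hull_shift; auto; [| lra |].
    - destruct Hd as [<-|[<-|[]]]; unfold dot; simpl; lra.
    - intros a b Ha Hb.
      assert (K := HMb (d, (a, b)) (in_prod _ _ _ _ Hd (in_prod _ _ _ _ Ha Hb))).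
      simpl in K. apply (Rmult_le_reg_l M); auto.
      rewrite <- Rmult_assoc, Rinv_r by (apply Rgt_not_eq; exact HM).
      lra. }
  assert (Hmid : x = comb (1 / 2) (shift x (/ M) (1, 0)) (shift x (/ M) (-1, 0)))
    by (destruct x; unfold comb, shift; simpl; f_equal; field; lra).
  assert (E := Hext _ _ (1 / 2) (Hshift _ (or_introl eq_refl))
                 (Hshift _ (or_intror (or_introl eq_refl))) ltac:(lra) Hmid).
  apply (f_equal fst) in E; simpl in E. lra.
Qed.

End Hull.

Lemma supports_collinear (S : point -> Prop) (q a b : point) :
  S a -> S b -> supports S q a -> supports S q b -> cross (vsub a q) (vsub b q) = 0.
Proof.
  intros Sa Sb Ha Hb. assert (h1 := Ha b Sb); assert (h2 := Hb a Sa).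
  revert h1 h2; unfold cross, vsub; simpl; intros; lra.
Qed.

Lemma extreme_supported_le2 (S : point -> Prop) (q : point) (L : list point) :
  NoDup L -> (forall x, In x L -> extreme_point S x /\ x <> q /\ supports S q x) ->
  (length L <= 2)%nat.
Proof.
  intros HL HA. destruct L as [|x1 [|x2 [|x3 r]]]; simpl; try lia. exfalso.
  apply NoDup_cons_iff in HL as [n1 HL]; apply NoDup_cons_iff in HL as [n2 _].
  assert (d12 : x1 <> x2) by (intro e; apply n1; left; auto).
  assert (d13 : x1 <> x3) by (intro e; apply n1; right; left; auto).
  assert (d23 : x2 <> x3) by (intro e; apply n2; left; auto).
  destruct (HA x1 ltac:(simpl; auto)) as [E1 [q1 W1]].
  destruct (HA x2 ltac:(simpl; auto)) as [E2 [_ W2]].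
  destruct (HA x3 ltac:(simpl; auto)) as [E3 [_ W3]].
  assert (X2 := collinear_shift q x1 x2
                  (supports_collinear S q x1 x2 (proj1 E1) (proj1 E2) W1 W2) q1).
  assert (X3 := collinear_shift q x1 x3
                  (supports_collinear S q x1 x3 (proj1 E1) (proj1 E3) W1 W3) q1).
  assert (Hu := dot_vsub_self_pos x1 q q1).
  set (u := vsub x1 q) in *.
  assert (X1 : x1 = shift q 1 u)
    by (unfold u; destruct x1, q; unfold shift, vsub; simpl; f_equal; ring).
  set (t2 := dot u (vsub x2 q) / dot u u) in *.
  set (t3 := dot u (vsub x3 q) / dot u u) in *.
  clearbody u t2 t3. subst x1 x2 x3.
  assert (Hmid : forall ta tb tc, ta < tb < tc -> extreme_point S (shift q ta u) ->
            extreme_point S (shift q tb u) -> extreme_point S (shift q tc u) -> False).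
  { intros ta tb tc Ht [Sa _] Eb [Sc _].
    assert (Hac : ta <> tc) by lra. apply Hac, (shift_inj q u); auto.
    apply (extreme_not_between S (shift q tb u) _ _ ((tb - ta) / (tc - ta))); auto.
    - split; [apply Rdiv_lt_0_compat; lra|].
      apply (Rmult_lt_reg_r (tc - ta)); [lra|]. field_simplify; lra.
    - apply shift_between; auto. }
  assert (n12 : 1 <> t2) by (intro e; apply d12; rewrite e; reflexivity).
  assert (n13 : 1 <> t3) by (intro e; apply d13; rewrite e; reflexivity).
  assert (n23 : t2 <> t3) by (intro e; apply d23; rewrite e; reflexivity).
  destruct (Rdichotomy _ _ n12), (Rdichotomy _ _ n13), (Rdichotomy _ _ n23);
    solve [ apply (Hmid 1 t2 t3); (assumption || lra) | apply (Hmid 1 t3 t2); (assumption || lra)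
          | apply (Hmid t2 1 t3); (assumption || lra) | apply (Hmid t2 t3 1); (assumption || lra)
          | apply (Hmid t3 1 t2); (assumption || lra) | apply (Hmid t3 t2 1); (assumption || lra)
          | lra ].
Qed.

Lemma NoDup_length_le_mul {A B : Type} (W : B -> A -> Prop) (k : nat) (Q : list B) :
  (forall q L, NoDup L -> (forall x, In x L -> W q x) -> (length L <= k)%nat) ->
  forall L, NoDup L -> (forall x, In x L -> exists q, In q Q /\ W q x) ->
  (length L <= k * length Q)%nat.
Proof.
  intros Hk. induction Q as [|q Q IH]; intros L HL HW.
  - destruct L as [|x L]; simpl; [lia|].
    destruct (HW x (or_introl eq_refl)) as [? [[] _]].
  - rewrite <- (filter_length (fun x => pbool (W q x)) L).
    assert ((length (filter (fun x => pbool (W q x)) L) <= k)%nat).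
    { apply (Hk q); [apply NoDup_filter; auto|].
      intros x Hx. apply filter_In in Hx as [_ Hx]. apply (proj1 (pboolP _)); auto. }
    assert ((length (filter (fun x => negb (pbool (W q x))) L) <= k * length Q)%nat).
    { apply IH; [apply NoDup_filter; auto|].
      intros x Hx. apply filter_In in Hx as [Hx Hn].
      destruct (HW x Hx) as [q' [[<-|Hq'] Wq']]; eauto.
      apply (proj2 (pboolP _)) in Wq'. rewrite Wq' in Hn. discriminate. }
    simpl; lia.
Qed.

(* Grow a duplicate-free list of elements of [E] until it covers [E]; the
   bound stops the growth. *)
Lemma bounded_NoDup_cover {A : Type} (E : A -> Prop) (N : nat) :
  (forall L, NoDup L -> (forall x, In x L -> E x) -> (length L <= N)%nat) ->
  exists V, (length V <= N)%nat /\ forall x, E x -> In x V.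
Proof.
  intros Hb.
  assert (grow : forall m L, NoDup L -> (forall x, In x L -> E x) ->
            (length L + m = N)%nat ->
            exists V, (length V <= N)%nat /\ forall x, E x -> In x V).
  { induction m as [|m IH]; intros L HL HE Hlen.
    - exists L; split; [lia|]. intros x Ex. apply NNPP; intro Hn.
      assert (Hc := Hb (x :: L) (NoDup_cons x Hn HL)
                      (fun y hy => match hy with
                                   | or_introl e => eq_ind x E Ex y e
                                   | or_intror h => HE y h end)).
      simpl in Hc; lia.
    - destruct (classic (forall x, E x -> In x L)) as [Hall|Hn].
      + exists L; split; [lia|auto].
      + apply not_all_ex_not in Hn as [x Hx].
        apply imply_to_and in Hx as [Ex Hx].
        apply (IH (x :: L)); [constructor; auto| |simpl; lia].
        intros y [<-|hy]; auto. }
  apply (grow N []); simpl; auto; [constructor | intros x []].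
Qed.

Lemma hull_extreme_NoDup_length (beta : R) (Ps : list upoint) (P : list point) (L : list point) :
  (forall U q, In U Ps -> In q U -> 0 <= snd q) ->
  (forall U q, In U Ps -> In q U -> In (fst q) P) ->
  NoDup P -> NoDup L -> (forall x, In x L -> extreme_point (beta_hull beta Ps) x) ->
  (length L <= 3 * length P)%nat.
Proof.
  intros Hnn Hsites HP HL HE.
  rewrite <- (filter_length (fun x => pbool (In x P)) L).
  assert ((length (filter (fun x => pbool (In x P)) L) <= length P)%nat).
  { apply NoDup_incl_length; [apply NoDup_filter; auto|].
    intros x Hx. apply filter_In in Hx as [_ Hx]. apply (proj1 (pboolP _)); auto. }
  assert ((length (filter (fun x => negb (pbool (In x P))) L) <= 2 * length P)%nat).
  { apply (NoDup_length_le_mul (fun q x => extreme_point (beta_hull beta Ps) x /\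
                                          x <> q /\ supports (beta_hull beta Ps) q x)).
    - intros q; apply extreme_supported_le2.
    - apply NoDup_filter; auto.
    - intros x Hx. apply filter_In in Hx as [Hx HnP].
      destruct (extreme_hull_supported beta Ps P Hnn Hsites x (HE x Hx)) as [q [Hq Hsup]].
      exists q; split; [exact Hq|]. split; [exact (HE x Hx)|split; [|exact Hsup]].
      intros ->. apply (proj2 (pboolP _)) in Hq. rewrite Hq in HnP. discriminate. }
  lia.
Qed.

Theorem mainTheorem9 :
  exists c : nat,
    forall (Ps : list upoint) (P : list point) (beta : R),
      (forall U, In U Ps -> valid_upoint U) ->
      NoDup P ->
      (forall p, In p P <-> exists U, In U Ps /\ In p (sites U)) ->
      0 <= beta <= 1 ->
      exists V : list point,
        (length V <= c * length P)%nat /\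
        (forall x, extreme_point (beta_hull beta Ps) x -> In x V).
Proof.
  exists 3%nat. intros Ps P beta Hvalid HP HsitesP _.
  assert (Hnn : forall U q, In U Ps -> In q U -> 0 <= snd q).
  { intros U q HU Hq. destruct (Hvalid U HU) as [_ [Hw _]]. specialize (Hw q Hq); lra. }
  assert (Hsites : forall U q, In U Ps -> In q U -> In (fst q) P).
  { intros U q HU Hq. apply HsitesP. exists U; split; auto. apply in_map; auto. }
  apply bounded_NoDup_cover. intros L HL HE.
  exact (hull_extreme_NoDup_length beta Ps P L Hnn Hsites HP HL HE).
Qed.
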